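(* Let $G$ be a long graph. Then $i(G)=\gamma(G)$.
   Context: All graphs are finite and simple. A graph $G$ is long if the set $\{x\in V(G):\deg(x)>2\}$ is independent. A set $A\subseteq V(G)$ is dominating if every vertex not in $A$ has a neighbor in $A$; $\gamma(G)$ is the minimum size of a dominating set and $i(G)$ the minimum size of an independent dominating set. *)

From mathcomp Require Import all_boot.
Set Implicit Arguments. Unset Strict Implicit. Unset Printing Implicit Defensive.

(* A finite simple graph: vertex type T : finType, adjacency e : rel T,
   required (in the theorem) to be symmetric and irreflexive. *)

Definition nbhd (T : finType) (e : rel T) (x : T) : {set T} := [set y | e x y].
Definition deg (T : finType) (e : rel T) (x : T) : nat := #|nbhd e x|.

Definition independent (T : finType) (e : rel T) (A : {set T}) : bool :=
  [forall x in A, forall y in A, ~~ e x y].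

Definition dominating (T : finType) (e : rel T) (A : {set T}) : bool :=
  [forall x, (x \in A) || [exists y in A, e x y]].

Definition long_graph (T : finType) (e : rel T) : bool :=
  independent e [set x | 2 < deg e x].

(* gamma(G): minimum size of a dominating set (setT is dominating, so the
   default #|T| is never strictly below the true minimum). *)
Definition domination_number (T : finType) (e : rel T) : nat :=
  \big[minn/#|T|]_(A : {set T} | dominating e A) #|A|.

(* i(G): minimum size of an independent dominating set (a maximal independent
   set always exists and has size <= #|T|). *)
Definition indep_domination_number (T : finType) (e : rel T) : nat :=
  \big[minn/#|T|]_(A : {set T} | independent e A && dominating e A) #|A|.

From mathcomp Require Import all_boot.
Set Implicit Arguments. Unset Strict Implicit. Unset Printing Implicit Defensive.

(* Take any dominating set D and remove the edges inside it one at a time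
   without enlarging D.  In a long graph every edge uv has an endpoint u of
   degree at most 2.  If D \ u still dominates, drop u; otherwise some x outside
   D is dominated by u alone, and then D \ u + x dominates: u is dominated by
   its neighbour v, and a vertex other than x and v dominated only through u
   would be a third neighbour of u.  Since x has no neighbour in D \ u, the
   swap removes the edge uv and creates none, so we end with an independent
   dominating set of size at most #|D|. *)

Section BigMin.

Variables (I : finType) (m : nat) (F : I -> nat).

Lemma bigmin_le_idx (P : pred I) : \big[minn/m]_(i | P i) F i <= m.
Proof. by elim/big_rec: _ => // i k _ km; rewrite geq_min km orbT. Qed.

Lemma bigmin_le (P : pred I) (i : I) : P i -> \big[minn/m]_(j | P j) F j <= F i.
Proof.
move=> Pi; have : i \in index_enum I by rewrite mem_index_enum.
elim: (index_enum I) => [|j r IHr] //; rewrite big_cons inE.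
case/predU1P => [<-|ri]; first by rewrite Pi geq_minl.
by case: (P j); rewrite ?geq_min IHr ?orbT.
Qed.

Lemma bigmin_mono (P Q : pred I) :
  (forall i, P i -> exists2 j, Q j & F j <= F i) ->
  \big[minn/m]_(j | Q j) F j <= \big[minn/m]_(i | P i) F i.
Proof.
move=> PQ; apply: (big_ind (fun k => _ <= k)) => [|k l|i Pi]; first exact: bigmin_le_idx.
  by rewrite leq_min => -> ->.
by have [j Qj le_ji] := PQ i Pi; exact: leq_trans (bigmin_le Qj) le_ji.
Qed.

End BigMin.

Section LongGraph.

Variables (T : finType) (e : rel T).
Hypotheses (e_sym : symmetric e) (e_irr : irreflexive e).

Definition inner_edges (D : {set T}) : {set T * T} :=
  [set p | [&& p.1 \in D, p.2 \in D & e p.1 p.2]].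

Lemma inner_edges_setD1 (D : {set T}) (u v : T) :
  u \in D -> v \in D -> e u v -> inner_edges (D :\ u) \proper inner_edges D.
Proof.
move=> uD vD euv; apply/properP; split.
  by apply/subsetP => -[a b]; rewrite !inE /= => /and3P[/andP[_ ->] /andP[_ ->]].
by exists (u, v); rewrite !inE /= ?eqxx ?uD ?vD ?euv.
Qed.

Lemma inner_edges_setU1 (A : {set T}) (x : T) :
  (forall y, y \in A -> ~~ e x y) -> inner_edges (x |: A) = inner_edges A.
Proof.
move=> x_no_nbr; apply/setP => -[a b]; rewrite !inE /=.
have [-> | _] := eqVneq a x; have [-> | _] := eqVneq b x; rewrite /= ?e_irr ?andbF //.
  by case bA: (b \in A); rewrite ?andbF // (negbTE (x_no_nbr b bA)) !andbF.
by case aA: (a \in A); rewrite //= e_sym (negbTE (x_no_nbr a aA)) !andbF.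
Qed.

Lemma dominatingP (D : {set T}) :
  reflect (forall x, x \notin D -> exists2 y, y \in D & e x y) (dominating e D).
Proof.
apply: (iffP forallP) => [domD x xD | domD x].
  by move: (domD x); rewrite (negbTE xD) => /existsP[y /andP[yD exy]]; exists y.
case: (boolP (x \in D)) => //= xD; have [y yD exy] := domD x xD.
by apply/existsP; exists y; rewrite yD.
Qed.

Lemma deg_gt2 (u a b c : T) :
  e u a -> e u b -> e u c -> a != b -> a != c -> b != c -> 2 < deg e u.
Proof.
move=> ea eb ec ab ac bc.
have sub : c |: [set a; b] \subset nbhd e u.
  by apply/subsetP => y; rewrite !inE => /orP[|/orP[]] /eqP->.
apply: leq_trans (subset_leq_card sub).
by rewrite cardsU1 cards2 !inE ![c == _]eq_sym (negbTE ac) (negbTE bc) ab.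
Qed.

Lemma long_graph_edge_low_deg (D : {set T}) :
  long_graph e -> ~~ independent e D ->
  exists u v, [/\ u \in D, v \in D, e u v & deg e u <= 2].
Proof.
move=> /forallP long /forallPn[u]; rewrite negb_imply => /andP[uD /forallPn[v]].
rewrite negb_imply negbK => /andP[vD euv].
case: (leqP (deg e u) 2) => du; first by exists u, v.
case: (leqP (deg e v) 2) => dv; first by exists v, u; rewrite e_sym.
by move: (long u); rewrite inE du => /forallP /(_ v); rewrite inE dv euv.
Qed.

Lemma dominating_swap (D : {set T}) (u v x : T) :
  dominating e D -> u \in D -> v \in D -> e u v -> deg e u <= 2 ->
  x \notin D -> e x u -> dominating e (x |: (D :\ u)).
Proof.
move=> /dominatingP domD uD vD euv du xD exu; apply/dominatingP => y.
have vu : v != u by apply: contraTneq euv => ->; rewrite e_irr.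
rewrite !inE negb_or negb_and negbK => /andP[yx /orP[/eqP-> | yD]].
  by exists v; rewrite // !inE vu vD orbT.
have [z zD eyz] := domD y yD; have [zu | zu] := eqVneq z u; last first.
  by exists z; rewrite // !inE zu zD orbT.
have neqD a b : a \in D -> b \notin D -> a != b by move=> aD; apply: contraNneq => <-.
have eux : e u x by rewrite e_sym.
have euy : e u y by rewrite e_sym -zu.
have xy : x != y by rewrite eq_sym.
by move: (deg_gt2 euv eux euy (neqD _ _ vD xD) (neqD _ _ vD yD) xy); rewrite ltnNge du.
Qed.

Lemma dominating_reduce_inner_edges (D : {set T}) :
  long_graph e -> dominating e D -> ~~ independent e D ->
  exists D' : {set T}, [/\ dominating e D', #|D'| <= #|D| &
                           #|inner_edges D'| < #|inner_edges D|].
Proof.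
move=> long domD /(long_graph_edge_low_deg long)[u [v [uD vD euv du]]].
have ltD := proper_card (inner_edges_setD1 uD vD euv).
have [domDu | /forallPn[x]] := boolP (dominating e (D :\ u)).
  by exists (D :\ u); rewrite domDu ltD subset_leq_card ?subsetDl.
rewrite negb_or => /andP[xDu /existsPn x_alone].
have x_no_nbr y : y \in D :\ u -> ~~ e x y by move=> yDu; move: (x_alone y); rewrite yDu.
have vDu : v \in D :\ u.
  by rewrite !inE vD andbT; apply: contraTneq euv => ->; rewrite e_irr.
have xu : x != u by apply: contraTneq (x_no_nbr v vDu) => ->; rewrite negbK.
have xD : x \notin D by move: xDu; rewrite !inE xu.
have exu : e x u.
  have [y yD exy] := dominatingP _ domD x xD.
  by have [<- // | yu] := eqVneq y u; move: (x_no_nbr y); rewrite !inE yu yD exy => /(_ isT).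
exists (x |: (D :\ u)); split; first exact: dominating_swap domD uD vD euv du xD exu.
  by rewrite cardsU1 (cardsD1 u D) uD xDu.
by rewrite inner_edges_setU1.
Qed.

Lemma independent_dominating_le (D : {set T}) :
  long_graph e -> dominating e D ->
  exists2 I : {set T}, independent e I && dominating e I & #|I| <= #|D|.
Proof.
move=> long; elim: {D}_.+1 {-2}D (ltnSn #|inner_edges D|) => // n IHn D ltDn domD.
have [indD | nindD] := boolP (independent e D); first by exists D; rewrite ?indD.
have [D' [domD' leD' ltD']] := dominating_reduce_inner_edges long domD nindD.
have [I indI leI] := IHn D' (leq_trans ltD' ltDn) domD'.
by exists I; rewrite // (leq_trans leI).
Qed.

End LongGraph.

Theorem theorem5p12 (T : finType) (e : rel T)
  (e_sym : symmetric e) (e_irr : irreflexive e) :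
  long_graph e -> indep_domination_number e = domination_number e.
Proof.
move=> long; apply/eqP; rewrite eqn_leq; apply/andP; split; apply: bigmin_mono.
  by move=> D domD; exact: independent_dominating_le.
by move=> I /andP[_ domI]; exists I.
Qed.
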